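(* Let $\{(F_j,d_j)\}_{j\ge 1}$ be a countable collection of metric spaces with labelled presentations $\mathcal F^j$ (common alphabet $\{1,\dots,m\}$, $m\ge2$) as in the context. If $\mathcal F=\bigcup_{j\ge1}\mathcal F^j$ is a strong modular chaotic structure for $F=\bigcup_{j\ge1}F_j$, then the map $\varPhi$ is modular chaotic in the Li-Yorke sense.
   Context: Setting. Let $(F_j,d_j)$, $j=1,2,\ldots$, be metric spaces and $m\ge2$ a natural number. For each $j$ there is a presentation $\mathcal F^j=\{\mathcal F^j_{i_1i_2\ldots}: i_k\in\{1,\dots,m\}\}$: every infinite sequence over $\{1,\dots,m\}$ labels an element of $F_j$ and every element of $F_j$ has at least one label (not necessarily unique). Put $\delta_j(\mathcal F^j_{i_1i_2\ldots},\mathcal F^j_{j_1j_2\ldots})=d_j(f_1,f_2)$ when the labels correspond to $f_1,f_2\in F_j$; write $\delta$ for $\delta_j$ on $\mathcal F^j$. For fixed $i_1,\dots,i_n$, $\mathcal F^j_{i_1\ldots i_n}=\bigcup_{j_k}\mathcal F^j_{i_1\ldots i_nj_1j_2\ldots}$; $\mathrm{diam}(A)=\sup\{\delta_j(x,y):x,y\in A\}$, $\delta_j(A,B)=\inf\{\delta_j(x,y):x\in A,y\in B\}$. $\mathcal F$ is a strong modular chaotic structure for $F$ if $\sup_j\max_{i_1\ldots i_n}\mathrm{diam}(\mathcal F^j_{i_1\ldots i_n})\to0$ as $n\to\infty$ (strong diameter condition), and for every $j$ there are $\varepsilon_0^j>0$ and a natural $n=n(j)$ such that for any $i_1\ldots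 i_n$ there exist $j_1\ldots j_n$ with $\delta_j(\mathcal F^j_{i_1\ldots i_n},\mathcal F^j_{j_1\ldots j_n})\ge\varepsilon_0^j$, with $\inf_j\varepsilon_0^j>0$. The modular similarity map: $\varphi(\mathcal F^j_{i_1i_2i_3\ldots})=\mathcal F^{j+1}_{i_2i_3\ldots}$. The multivalued map $\varPhi:F\to F$ sends $f\in F_j$ to the points of $F_{j+1}$ labelled by $\varphi(\mathcal F^j_{i_1i_2\ldots})$ for all labels of $f$; $\varPhi$ is modular chaotic in the Li-Yorke sense if $\varphi$ is. A point $\mathcal F^j_{i_1i_2\ldots}$ is (modular-)periodic with period $p$ if its lower index is an endless repetition of a block of $p$ terms. Modular Li-Yorke chaos of $\varphi$: in addition to the modular-periodic points, for each $j=1,2,\ldots$ there is an uncountable scrambled set of non-periodic points in $\mathcal F^j$ such that for each couple $x,y$ in the set with $\delta(x,y)\ne0$: $\limsup_{k\to\infty}\delta(\varphi^k(x),\varphi^k(y))>0$ and $\liminf_{k\to\infty}\delta(\varphi^k(x),\varphi^k(y))=0$; and for each point $x$ of the set and each periodic point $y$ of $\mathcal F^j$: $\limsup_{k\to\infty}\delta(\varphi^k(x),\varphi^k(y))>0$. *)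

From HB Require Import structures.
From mathcomp Require Import all_boot all_order all_algebra.
From mathcomp Require Import all_classical all_reals all_analysis.
Set Implicit Arguments. Unset Strict Implicit. Unset Printing Implicit Defensive.
Import Order.TTheory GRing.Theory Num.Theory.
Local Open Scope classical_set_scope.
Local Open Scope ring_scope.

(* Labels: infinite sequences over the alphabet {1..m}, encoded as 'I_m. *)
Definition label (m : nat) := nat -> 'I_m.

Definition is_metric (R : realType) (T : Type) (d : T -> T -> R) : Prop :=
  (forall x y, 0 <= d x y) /\ (forall x y, d x y = 0 <-> x = y) /\
  (forall x y, d x y = d y x) /\ (forall x y z, d x z <= d x y + d y z).

Section Defs.
Variables (R : realType) (m : nat) (F : nat -> Type)
  (d : forall j, F j -> F j -> R) (pi : forall j, label m -> F j).

Definition delta j (x y : label m) : R := d (pi j x) (pi j y).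

(* the cylinder F^j_{i_1...i_n} (as a set of labels) *)
Definition cyl n (w : 'I_n -> 'I_m) : set (label m) :=
  [set s | forall k : 'I_n, s k = w k].

Definition diam j (A : set (label m)) : \bar R :=
  ereal_sup [set (delta j x y)%:E | x in A & y in A].

Definition setdist j (A B : set (label m)) : \bar R :=
  ereal_inf [set (delta j x y)%:E | x in A & y in B].

Definition strong_modular_chaotic_structure : Prop :=
  ((fun n => ereal_sup [set diam j (cyl w) | j in [set: nat] & w in [set: 'I_n -> 'I_m]])
      @ \oo --> (0 : \bar R)%E)
  /\
  (exists (eps0 : nat -> R) (nn : nat -> nat),
     (forall j, 0 < eps0 j) /\
     (forall j (w : 'I_(nn j) -> 'I_m), exists w' : 'I_(nn j) -> 'I_m,
         (setdist j (cyl w) (cyl w') >= (eps0 j)%:E)%E) /\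
     (0 < ereal_inf [set (eps0 j)%:E | j in [set: nat]])%E).

(* modular similarity map phi applied k times to a label of F^j,
   yielding a label of F^(j+k); distance at level j+k *)
Definition shiftk (k : nat) (x : label m) : label m := fun i => x (i + k)%N.

Definition delta_iter j (x y : label m) (k : nat) : \bar R :=
  (delta (j + k) (shiftk k x) (shiftk k y))%:E.

Definition periodic_with (p : nat) (x : label m) : Prop :=
  (0 < p)%N /\ forall i, x (i + p)%N = x i.

Definition periodic (x : label m) : Prop := exists p, periodic_with p x.

Definition modular_LiYorke_chaotic : Prop :=
  (forall j : nat, forall p : nat, (0 < p)%N -> exists x : label m, periodic_with p x)
  /\
  forall j : nat, exists S : set (label m),
    ~ countable S /\
    (forall x, S x -> ~ periodic x) /\
    (forall x y, S x -> S y -> delta j x y != 0 ->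
        (0 < limn_esup (delta_iter j x y))%E /\
        limn_einf (delta_iter j x y) = 0%E) /\
    (forall x y, S x -> periodic y -> (0 < limn_esup (delta_iter j x y))%E).

End Defs.

From Pilot Require Import Defs.
From HB Require Import structures.
From mathcomp Require Import all_boot all_order all_algebra.
From mathcomp Require Import all_classical all_reals all_analysis.
Import Order.TTheory GRing.Theory Num.Theory.
Local Open Scope classical_set_scope.
Local Open Scope ring_scope.

(** Fix a letter [z].  The separation condition yields, at every level [l], a
  word [w l] of length [nn l] whose cylinder is at distance at least
  [e = inf eps0 > 0] from the cylinder of [z^(nn l)].  A bit sequence [b] is
  coded into a label at level [j] as a concatenation of blocks: block [t],
  starting at position [s t], carries [w (j + s t)] or [z^(nn (j + s t))]
  according to the bit [b (log2 (t + 1))], and is followed by [t + 1] letters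
  [z].  Every value of [log2 (t + 1)] recurs, so the orbits of two different
  codes are [e]-apart infinitely often; the gaps put both orbits infinitely
  often in a common cylinder of length [t + 1], whose diameter is uniformly
  small.  By the triangle inequality a periodic label is asymptotic to at most
  one code, and there are countably many periodic labels: removing the codes
  asymptotic to one of them leaves an uncountable scrambled set. *)

Set Implicit Arguments.
Unset Strict Implicit.

Definition infinitely_often (P : nat -> Prop) : Prop :=
  forall n, exists2 k, (n <= k)%N & P k.

Lemma infinitely_often_near (P Q : nat -> Prop) :
  infinitely_often P -> (\forall k \near \oo, Q k) -> exists2 k, P k & Q k.
Proof.
by move=> often [N _ QN]; have [k Nk Pk] := often N; exists k => //; exact: QN.
Qed.

Section limn_esup_einf.
Context {R : realType}.
Implicit Types (u : (\bar R)^nat) (c : \bar R).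
Local Open Scope ereal_scope.

Lemma limn_esupE u : limn_esup u = ereal_inf (range (esups u)).
Proof. by rewrite limn_esup_lim; apply/cvg_lim => //; exact: cvg_esups_inf. Qed.

Lemma limn_einfE u : limn_einf u = ereal_sup (range (einfs u)).
Proof. by rewrite limn_einf_lim; apply/cvg_lim => //; exact: cvg_einfs_sup. Qed.

Lemma limn_esup_ge_often u c :
  infinitely_often (fun k => c <= u k) -> c <= limn_esup u.
Proof.
move=> often; rewrite limn_esupE; apply: le_ereal_inf_tmp => _ [n _ <-].
have [k nk /le_trans] := often n; apply.
by apply: ereal_sup_ubound; exists k.
Qed.

Lemma limn_esup_le u c : (forall k, u k <= c) -> limn_esup u <= c.
Proof.
move=> uc; rewrite limn_esupE; apply: le_trans (ereal_inf_lbound _) _.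
  by exists 0%N.
by apply: ge_ereal_sup => _ [k _ <-].
Qed.

Lemma limn_esup_lt_near u c : limn_esup u < c -> \forall k \near \oo, u k < c.
Proof.
rewrite limn_esupE => /ereal_inf_lt[_ [N _ <-] supNc]; exists N => // k Nk.
by apply: le_lt_trans supNc; apply: ereal_sup_ubound; exists k.
Qed.

Lemma limn_einf_eq0 u : (forall k, 0 <= u k) ->
  (forall r : R, (0 < r)%R -> infinitely_often (fun k => u k <= r%:E)) ->
  limn_einf u = 0.
Proof.
move=> u_ge0 small; rewrite limn_einfE; apply/eqP; rewrite eq_le; apply/andP; split.
  apply: ge_ereal_sup => _ [n _ <-]; apply/lee_addgt0Pr => r r0; rewrite add0e.
  have [k nk /(le_trans _)] := small r r0 n; apply.
  by apply: ereal_inf_lbound; exists k.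
apply: le_trans (ereal_sup_ubound _); last by exists 0%N.
by apply: le_ereal_inf_tmp => _ [k _ <-].
Qed.

End limn_esup_einf.

Lemma countableU T (A B : set T) :
  countable A -> countable B -> countable (A `|` B).
Proof.
move=> cA cB; have -> : A `|` B = \bigcup_(i in [set: bool]) (if i then A else B).
  apply/seteqP; split=> [x [Ax|Bx]|x [[] _ ?]];
    [by exists true|by exists false|by left|by right].
by apply: bigcup_countable => // -[].
Qed.

Lemma not_countable_bool_seq : ~ countable [set: nat -> bool].
Proof.
move=> /countable_injP[code code_inj].
pose decode n : nat -> bool :=
  if pselect (exists b, code b = n) is left h then projT1 (cid h) else xpredT.
have decodeK b : decode (code b) = b.
  rewrite /decode; case: pselect => [h|[]]; last by exists b.
  by case: (cid h) => b' /= /code_inj; apply; rewrite inE.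
pose diag n := ~~ decode n n.
have := congr1 (fun b => b (code diag)) (decodeK diag).
by rewrite /diag /=; case: (decode _ _).
Qed.

Lemma countable_unique_partner T U (A : set T) (P : set U) (rel : T -> U -> Prop) :
  countable P ->
  (forall x x' y, A x -> A x' -> rel x y -> rel x' y -> x = x') ->
  countable [set x | A x /\ exists2 y, P y & rel x y].
Proof.
move=> cP uniq; set B := [set x | _].
have [->|/set0P[x0 _]] := eqVneq B set0; first exact: countable0.
pose partner y :=
  if pselect (exists x, A x /\ rel x y) is left h then projT1 (cid h) else x0.
apply: (sub_countable _ cP); apply: (card_le_trans _ (card_image_le partner P)).
apply: subset_card_le => x [Ax [y Py xy]]; exists y => //.
rewrite /partner; case: pselect => [h|[]]; last by exists x.
by case: (cid h) => x' /= [Ax' x'y]; apply: uniq x'y xy.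
Qed.

Definition cycle_label {m} (x0 : 'I_m) (s : seq 'I_m) : label m :=
  fun i => nth x0 s (i %% size s)%N.

Lemma periodic_with_mod m p (x : label m) :
  periodic_with p x -> forall i, x i = x (i %% p)%N.
Proof.
move=> [_ xp] i; rewrite {1}(divn_eq i p).
by elim: (i %/ p)%N => [|k IHk]; rewrite ?mul0n ?add0n // mulSn -addnA addnC xp.
Qed.

Lemma periodic_withE m p (x : label m) :
  periodic_with p x -> x = cycle_label (x 0%N) (mkseq x p).
Proof.
move=> xp; have [p_gt0 _] := xp; apply: funext => i.
by rewrite /cycle_label size_mkseq nth_mkseq ?ltn_mod // -periodic_with_mod.
Qed.

Lemma countable_periodic m : countable [set x : label m | Defs.periodic x].
Proof.
apply: (sub_countable _ (countableP [set: 'I_m * seq 'I_m])).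
apply: (card_le_trans _ (card_image_le (fun s => cycle_label s.1 s.2) _)).
apply: subset_card_le => x [p /periodic_withE xE].
by exists (x 0%N, mkseq x p) => //; rewrite -xE.
Qed.

Section ScrambledFamily.
Variables (R : realType) (T : Type) (D : nat -> T -> T -> R).
Hypotheses (D_ge0 : forall k x y, 0 <= D k x y) (Dxx : forall k x, D k x x = 0)
  (DC : forall k x y, D k x y = D k y x)
  (D_triangle : forall k x y z, D k x z <= D k x y + D k y z).

Local Notation upper x y := (limn_esup (fun k => (D k x y)%:E)).
Local Notation lower x y := (limn_einf (fun k => (D k x y)%:E)).

Lemma upper_le0_near x y (r : R) : 0 < r -> ~ (0 < upper x y)%E ->
  \forall k \near \oo, D k x y < r.
Proof.
move=> r0 /negP; rewrite -leNgt => le0.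
have /limn_esup_lt_near : (upper x y < r%:E)%E.
  by apply: le_lt_trans le0 _; rewrite lte_fin.
by apply: filterS => k; rewrite lte_fin.
Qed.

Lemma asymptotic_to_common_point x x' y (r : R) : 0 < r ->
  ~ (0 < upper x y)%E -> ~ (0 < upper x' y)%E -> \forall k \near \oo, D k x x' < r.
Proof.
move=> r0 xy x'y; have r20 : 0 < r / 2 by rewrite divr_gt0.
near=> k; apply: le_lt_trans (D_triangle k x y x') _.
rewrite (DC k y) [r]splitr ltrD //; near: k; exact: upper_le0_near.
Unshelve. all: by end_near.
Qed.

Variables (X : (nat -> bool) -> T) (e : R).
Hypotheses (e_gt0 : 0 < e)
  (X_separated : forall b b', b <> b' ->
     infinitely_often (fun k => e <= D k (X b) (X b')))
  (X_proximal : forall b b' r, 0 < r ->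
     infinitely_often (fun k => D k (X b) (X b') <= r)).

Lemma family_inj : injective X.
Proof.
move=> b b' Xbb'; apply: contrapT => /X_separated/(_ 0%N)[k _].
by rewrite Xbb' Dxx leNgt e_gt0.
Qed.

Lemma family_asymptotic_uniq x x' y : range X x -> range X x' ->
  ~ (0 < upper x y)%E -> ~ (0 < upper x' y)%E -> x = x'.
Proof.
move=> [b _ <-] [b' _ <-] xy x'y; have [-> //|ne] := pselect (b = b').
have [k] := infinitely_often_near (X_separated ne)
  (asymptotic_to_common_point e_gt0 xy x'y).
by move=> /le_lt_trans/[apply]; rewrite ltxx.
Qed.

Theorem scrambled_subfamily (P : set T) : countable P ->
  exists S : set T, [/\ ~ countable S, (forall x, S x -> ~ P x),
    (forall x y, S x -> S y -> x <> y -> (0 < upper x y)%E /\ lower x y = 0%E) &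
    (forall x y, S x -> P y -> (0 < upper x y)%E)].
Proof.
move=> cP; pose Bad := [set x | range X x /\ exists2 y, P y & ~ (0 < upper x y)%E].
have cBad : countable Bad := countable_unique_partner cP family_asymptotic_uniq.
exists (range X `\` Bad); split.
- move=> cS; apply: not_countable_bool_seq.
  have : countable (range X).
    apply: sub_countable (countableU cS cBad); apply: subset_card_le => x Xx.
    by have [|] := pselect (Bad x); [right|left].
  move=> /countable_injP[f f_inj]; apply/countable_injP; exists (f \o X).
  by move=> b b' _ _ /f_inj; rewrite !inE => /(_ (imageT _ _) (imageT _ _)) /family_inj.
- move=> x [Xx notBad] Px; apply: notBad; split => //; exists x => //.
  by apply/negP; rewrite -leNgt; apply: limn_esup_le => k; rewrite Dxx.
- move=> _ _ [[b _ <-] _] [[b' _ <-] _] Xbb'.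
  have ne : b <> b' by move=> eb; apply: Xbb'; rewrite eb.
  split.
    apply: (@lt_le_trans _ _ e%:E); first by rewrite lte_fin.
    apply: limn_esup_ge_often => n; have [k nk sep] := X_separated ne n.
    by exists k; rewrite ?lee_fin.
  apply: limn_einf_eq0 => [k|r r0 n]; first by rewrite lee_fin.
  by have [k nk close] := X_proximal b b' r0 n; exists k; rewrite ?lee_fin.
- move=> x y [Xx notBad] Py; apply: contrapT => xy.
  by apply: notBad; split => //; exists y.
Qed.

End ScrambledFamily.

Section Blocks.
Local Open Scope nat_scope.

Section Splice.
Context {T : Type} (s : nat -> nat).
Hypotheses (s0 : s 0 = 0) (s_lt : forall t, s t < s t.+1).

Fixpoint block i :=
  if i is i'.+1 then
    let b := block i' in if s b.+1 <= i'.+1 then b.+1 else b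
  else 0.

Lemma blockP i : s (block i) <= i < s (block i).+1.
Proof.
elim: i => [|i IHi] /=; first by have := s_lt 0; rewrite s0 => ->.
have /andP[sb_le_i i_lt] := IHi.
case: ifP => [-> /=|/negbT]; first exact: leq_ltn_trans i_lt (s_lt _).
by rewrite -ltnNge => ->; rewrite andbT (leq_trans sb_le_i).
Qed.

Lemma block_eq t i : s t <= i < s t.+1 -> block i = t.
Proof.
have s_le : {homo s : a b / a <= b}.
  exact: homo_leq leqnn leq_trans (fun t => ltnW (s_lt t)).
move=> /andP[st_le_i i_lt]; have /andP[sb_le_i i_lt'] := blockP i.
case: (ltngtP (block i) t) => // [/s_le sb_le | /s_le st_le].
  by move: (leq_ltn_trans (leq_trans sb_le st_le_i) i_lt'); rewrite ltnn.
by move: (leq_ltn_trans (leq_trans st_le sb_le_i) i_lt); rewrite ltnn.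
Qed.

Definition splice (u : nat -> nat -> T) : nat -> T :=
  fun i => u (block i) (i - s (block i)).

Lemma splice_block u t r : s t + r < s t.+1 -> splice u (s t + r) = u t r.
Proof. by move=> lt; rewrite /splice (@block_eq t) ?addKn // leq_addr. Qed.

End Splice.

Fixpoint block_start (len : nat -> nat) t :=
  if t is t'.+1 then block_start len t' + len (block_start len t') + t'.+1
  else 0.

Lemma block_start_lt len t : block_start len t < block_start len t.+1.
Proof. by rewrite /= addnS ltnS -addnA leq_addr. Qed.

Lemma block_start_ge len t : t <= block_start len t.
Proof. by elim: t => //= t IHt; rewrite addnS ltnS leq_addl. Qed.

Lemma logn2_often i : infinitely_often (fun t => logn 2 t.+1 = i).
Proof.
move=> n; have pos : 0 < 2 ^ i * n.*2.+1 by rewrite muln_gt0 expn_gt0.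
exists (2 ^ i * n.*2.+1).-1.
  rewrite -ltnS prednK // (leq_trans _ (leq_pmull _ _)) ?expn_gt0 //.
  by rewrite ltnS -addnn leq_addr.
rewrite prednK // lognM ?expn_gt0 // pfactorK // logn_coprime ?addn0 //.
by rewrite coprime2n /= odd_double.
Qed.

Section Coding.
Variables (m : nat) (z : 'I_m) (len : nat -> nat) (w : nat -> nat -> 'I_m).
Local Notation s := (block_start len).

Definition coded_label (b : nat -> bool) : label m :=
  splice s (fun t r => if (r < len (s t)) && b (logn 2 t.+1) then w (s t) r else z).

Let coded_label_at b t r : r < len (s t) + t.+1 ->
  coded_label b (s t + r) =
  if (r < len (s t)) && b (logn 2 t.+1) then w (s t) r else z.
Proof.
move=> r_lt; rewrite /coded_label splice_block //; first exact: block_start_lt.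
by rewrite /= -addnA ltn_add2l.
Qed.

Lemma coded_label_word b t r : r < len (s t) ->
  coded_label b (s t + r) = if b (logn 2 t.+1) then w (s t) r else z.
Proof.
move=> r_lt; rewrite coded_label_at ?r_lt //.
by rewrite (leq_trans r_lt) // leq_addr.
Qed.

Lemma coded_label_gap b t r : r <= t ->
  coded_label b (s t + len (s t) + r) = z.
Proof.
move=> r_le; rewrite -addnA coded_label_at ?ltn_add2l //.
by rewrite ltnNge leq_addr.
Qed.

End Coding.

End Blocks.

Section LabelledSpaces.
Variables (R : realType) (m : nat) (F : nat -> Type)
  (d : forall j, F j -> F j -> R) (pi : forall j, label m -> F j).
Hypothesis d_metric : forall j, is_metric (@d j).
Local Notation delta := (delta d pi).

Lemma delta_ge0 j x y : 0 <= delta j x y.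
Proof. by have [d_ge0 _] := d_metric j; apply: d_ge0. Qed.

Lemma deltaxx j x : delta j x x = 0.
Proof. by have [_ [d_eq0 _]] := d_metric j; apply/d_eq0. Qed.

Lemma deltaC j x y : delta j x y = delta j y x.
Proof. by have [_ [_ [dC _]]] := d_metric j; apply: dC. Qed.

Lemma delta_triangle j x y z : delta j x z <= delta j x y + delta j y z.
Proof. by have [_ [_ [_ d_tri]]] := d_metric j; apply: d_tri. Qed.

Hypothesis smcs : strong_modular_chaotic_structure d pi.

Lemma small_cylinders r : 0 < r -> \forall n \near \oo,
  forall j (w : 'I_n -> 'I_m) x y, cyl w x -> cyl w y -> delta j x y < r.
Proof.
move=> r_gt0; have [diam_cvg _] := smcs.
have r_gt0E : (0 < r%:E)%E by rewrite lte_fin.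
have [N _ sup_lt] := diam_cvg _ (open_ereal_lt' r_gt0E).
near=> n => j w x y wx wy.
have /sup_lt /= {}sup_lt : (N <= n)%N by near: n; exact: nbhs_infty_ge.
rewrite -lte_fin; apply: le_lt_trans sup_lt.
apply: (@le_trans _ _ (diam d pi j (cyl w))).
  by apply: ereal_sup_ubound; exists x => //; exists y.
by apply: ereal_sup_ubound; exists j => //; exists w.
Unshelve. all: by end_near.
Qed.

Lemma uniform_separation (z : 'I_m) : exists2 e : R, 0 < e &
  exists (nn : nat -> nat) (w : nat -> nat -> 'I_m), forall l x y,
    cyl (fun _ : 'I_(nn l) => z) x -> cyl (fun k : 'I_(nn l) => w l k) y ->
    e <= delta l x y.
Proof.
have [_ [eps0 [nn [_ [sep inf_gt0]]]]] := smcs.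
set E := ereal_inf _ in inf_gt0.
have E_le l : (E <= (eps0 l)%:E)%E by apply: ereal_inf_lbound; exists l.
have E_fin : E \is a fin_num.
  by rewrite ge0_fin_numE ?(ltW inf_gt0) // (le_lt_trans (E_le 0%N)) ?ltry.
exists (fine E); first by rewrite -lte_fin fineK.
pose w l := projT1 (cid (sep l (fun _ => z))).
exists nn, (fun l r => if insub r is Some k then w l k else z) => l x y zx wy.
rewrite -lee_fin fineK //; apply: le_trans (E_le l) _.
rewrite /w in wy; case: cid wy => /= wl /le_trans sep_wl wy; apply: sep_wl.
apply: ereal_inf_lbound; exists x => //; exists y => // k.
by rewrite wy valK.
Qed.

Section CodedOrbits.
Variables (j : nat) (z : 'I_m) (e : R) (nn : nat -> nat) (w : nat -> nat -> 'I_m).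
Hypothesis sep : forall l x y,
  cyl (fun _ : 'I_(nn l) => z) x -> cyl (fun k : 'I_(nn l) => w l k) y ->
  e <= delta l x y.

Local Notation len := (fun a => nn (j + a)).
Local Notation X := (coded_label z len (fun a => w (j + a))).
Local Notation orbit_delta k x y := (delta (j + k) (shiftk k x) (shiftk k y)).

Lemma coded_label_separated b b' : b <> b' ->
  infinitely_often (fun k => e <= orbit_delta k (X b) (X b')).
Proof.
move=> ne n; have [i bi] : exists i, b i <> b' i.
  by apply/existsNP => eq_b; apply: ne; apply: funext.
have [t nt ti] := logn2_often i n.
exists (block_start len t); first exact: leq_trans nt (block_start_ge _ t).
have word c (r : 'I_(len (block_start len t))) :
    shiftk (block_start len t) (X c) r =
    if c i then w (j + block_start len t) r else z.
  by rewrite /shiftk addnC coded_label_word ?ti.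
move: bi; case bi: (b i); case b'i: (b' i) => // _.
  by rewrite deltaC; apply: sep => r; rewrite word ?bi ?b'i.
by apply: sep => r; rewrite word ?bi ?b'i.
Qed.

Lemma coded_label_proximal b b' r : 0 < r ->
  infinitely_often (fun k => orbit_delta k (X b) (X b') <= r).
Proof.
move=> r_gt0 n; have [N _ small] := small_cylinders r_gt0.
pose t := maxn n N; set s := block_start len t.
have gap c : cyl (fun _ : 'I_t.+1 => z) (shiftk (s + len s) (X c)).
  by move=> o; rewrite /shiftk addnC coded_label_gap // -ltnS.
exists (s + len s).
  exact: leq_trans (leq_maxl n N) (leq_trans (block_start_ge _ t) (leq_addr _ _)).
apply/ltW/(small t.+1 _ _ _ _ _ (gap b) (gap b')).
exact: leq_trans (leq_maxr n N) (leqnSn _).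
Qed.

End CodedOrbits.

End LabelledSpaces.

Theorem theorem3 (R : realType) (m : nat) (F : nat -> Type)
  (d : forall j, F j -> F j -> R) (pi : forall j, label m -> F j) :
  (2 <= m)%N ->
  (forall j, is_metric (d j)) ->
  (forall j, forall f : F j, exists x : label m, pi j x = f) ->
  strong_modular_chaotic_structure d pi ->
  modular_LiYorke_chaotic d pi.
Proof.
(* The labellings need not be onto: the conclusion only speaks of labels. *)
move=> m_ge2 d_metric _ smcs; pose z : 'I_m := Ordinal (ltnW m_ge2).
split=> [j p p_gt0|j]; first by exists (fun=> z).
have [e e_gt0 [nn [w sep]]] := uniform_separation smcs z.
have [S [S_unc S_aper S_scr S_per]] := scrambled_subfamily
  (D := fun k x y => delta d pi (j + k) (shiftk k x) (shiftk k y))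
  (fun k x y => delta_ge0 pi d_metric _ _ _) (fun k x => deltaxx pi d_metric _ _)
  (fun k x y => deltaC pi d_metric _ _ _)
  (fun k x y z => delta_triangle pi d_metric _ _ _ _)
  e_gt0 (coded_label_separated d_metric j sep) (coded_label_proximal smcs j z nn w)
  (countable_periodic m).
exists S; split; [by []|split; [exact: S_aper|split; last exact: S_per]].
move=> x y Sx Sy dxy; apply: S_scr => // xy.
by rewrite xy (deltaxx pi d_metric) eqxx in dxy.
Qed.
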